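(* If $A,B\in\mathcal T_{n,d}$ are block Toeplitz matrices with $A\intercal B$, then $\mathbf E_i(A)\intercal\mathbf E_j(B)$ for all $i,j\in\{0,\dots,n-1\}$.
   Context: $\mathcal T_{n,d}$ is the set of $n\times n$ block Toeplitz matrices $A=(A_{i-j})_{i,j=0}^{n-1}$ with entries $A_m\in\mathcal M_d(\mathbb C)$. For block Toeplitz $A,B$, write $A\intercal B$ if $AB$ is block Toeplitz. For $k=0,\dots,n-1$, $\mathbf E_k$ is the map on $n\times n$ block matrices such that the $(i,j)$ block entry of $\mathbf E_k(T)$ equals $T_{i,j}$ if $i-j=k$ or $i-j=k-n$, and $0$ otherwise. *)

From HB Require Import structures.
From mathcomp Require Import all_boot all_order all_algebra.
Set Implicit Arguments. Unset Strict Implicit. Unset Printing Implicit Defensive.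
Import GRing.Theory.
Local Open Scope ring_scope.

Definition blockmx (R : nzRingType) (n d : nat) := 'I_n -> 'I_n -> 'M[R]_d.

Definition is_block_toeplitz (R : nzRingType) (n d : nat) (T : blockmx R n d) : Prop :=
  exists a : int -> 'M[R]_d, forall i j : 'I_n, T i j = a (i%:Z - j%:Z).

Definition bmul (R : nzRingType) (n d : nat) (A B : blockmx R n d) : blockmx R n d :=
  fun i j => \sum_(k < n) (A i k *m B k j).

(* A ⊺ B : AB is block Toeplitz (A, B assumed block Toeplitz in the statement). *)
Definition tcomm (R : nzRingType) (n d : nat) (A B : blockmx R n d) : Prop :=
  is_block_toeplitz (bmul A B).

Definition Ek (R : nzRingType) (n d : nat) (k : nat) (T : blockmx R n d) : blockmx R n d :=
  fun i j => if (i%:Z - j%:Z == k%:Z) || (i%:Z - j%:Z == k%:Z - n%:Z)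
             then T i j else 0.

From mathcomp Require Import all_boot all_order all_algebra.
From mathcomp Require Import zify.
Set Implicit Arguments. Unset Strict Implicit. Unset Printing Implicit Defensive.
Import GRing.Theory.
Local Open Scope ring_scope.

(* Write n = m+1 and let T, U be block Toeplitz with symbols
   a, b : int -> 'M_d.  Comparing the entries (x+1, y+1) and (x, y) of TU, all
   terms of the two sums agree except one boundary term of each, which gives
     (TU)(x+1,y+1) + a(x-m) b(m-y) = (TU)(x,y) + a(x+1) b(-(y+1)).
   Hence TU is block Toeplitz iff the "corner condition"
     a(x-m) b(m-y) = a(x+1) b(-(y+1))      for all x, y < m
   holds.  E_k(T) is block Toeplitz with the band symbol of a, which only keeps
   a(k) and a(k-n).  For x, y < m the band symbol of a is nonzero at x-m and at
   x+1 under the same condition x+1 = k, and that of b is nonzero at m-y and at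
   -(y+1) under the same condition m-y = l; so the corner condition for the band
   symbols either reduces to 0 = 0 or to the corner condition for a and b. *)

(* A block matrix invariant under the diagonal shift (x,y) -> (x+1,y+1) is
   block Toeplitz: its symbol is read off the first column and first row. *)
Lemma toeplitz_of_diag_shift (R : nzRingType) m d (T : blockmx R m.+1 d) :
  (forall x y : nat, (x < m)%N -> (y < m)%N ->
     T (inord x.+1) (inord y.+1) = T (inord x) (inord y)) ->
  is_block_toeplitz T.
Proof.
move=> shift1.
have shiftk k x y : (x + k <= m)%N -> (y + k <= m)%N ->
    T (inord (x + k)) (inord (y + k)) = T (inord x) (inord y).
  elim: k x y => [|k IH] x y hx hy; first by rewrite !addn0.
  rewrite !addnS shift1; [apply: IH|..]; lia.
exists (fun z => match z with
                 | Posz k => T (inord k) (inord 0)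
                 | Negz k => T (inord 0) (inord k.+1) end).
move=> i j; have hi := ltn_ord i; have hj := ltn_ord j.
case: (leqP j i) => hij.
- rewrite subzn //.
  have := shiftk j (i - j)%N 0%N; rewrite subnK // add0n !inord_val => -> //; lia.
- have -> : i%:Z - j%:Z = Negz (j - i.+1) by rewrite NegzE; lia.
  have := shiftk i 0%N (j - i)%N; rewrite subnK ?add0n ?inord_val; last lia.
  move=> -> //; try lia.
  by congr (T _ (inord _)); lia.
Qed.

Section ToeplitzProduct.
Variables (R : nzRingType) (m d : nat).
Implicit Types (T U : blockmx R m.+1 d) (a b : int -> 'M[R]_d).

(* Boundary identity: shifting an entry of a product of block Toeplitz
   matrices along the diagonal only exchanges one extreme term of the sum. *)
Lemma bmul_diag_shift T U a b :
  (forall p q, T p q = a (p%:Z - q%:Z)) -> (forall p q, U p q = b (p%:Z - q%:Z)) ->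
  forall x y : nat, (x < m)%N -> (y < m)%N ->
  bmul T U (inord x.+1) (inord y.+1) + a (x%:Z - m%:Z) *m b (m%:Z - y%:Z) =
  bmul T U (inord x) (inord y) + a x.+1%:Z *m b (- y.+1%:Z).
Proof.
move=> hT hU x y hx hy; rewrite /bmul.
rewrite big_ord_recl big_ord_recr /= !hT !hU !inordK; try lia.
rewrite -addrA addrC; congr (_ + _); last by congr (a _ *m b _); rewrite /=; lia.
congr (_ + _); apply: eq_bigr => k _.
rewrite !hT !hU !inordK /=; try lia.
by congr (a _ *m b _); rewrite /bump /=; lia.
Qed.

Definition corner_cond a b : Prop :=
  forall x y : nat, (x < m)%N -> (y < m)%N ->
  a (x%:Z - m%:Z) *m b (m%:Z - y%:Z) = a x.+1%:Z *m b (- y.+1%:Z).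

Lemma tcomm_cornerP T U a b :
  (forall p q, T p q = a (p%:Z - q%:Z)) -> (forall p q, U p q = b (p%:Z - q%:Z)) ->
  tcomm T U <-> corner_cond a b.
Proof.
move=> hT hU; split.
- move=> [c hc] x y hx hy; have := bmul_diag_shift hT hU hx hy.
  rewrite (hc (inord x.+1)) (hc (inord x)) !inordK; try lia.
  have -> : x.+1%:Z - y.+1%:Z = x%:Z - y%:Z by lia.
  by move/addrI.
- move=> corner; apply: toeplitz_of_diag_shift => x y hx hy.
  by have := bmul_diag_shift hT hU hx hy; rewrite corner //; move/addIr.
Qed.

End ToeplitzProduct.

Definition in_band (n k : nat) (z : int) : bool :=
  (z == k%:Z) || (z == k%:Z - n%:Z).

Definition band_symbol (R : nzRingType) d (n k : nat) (a : int -> 'M[R]_d) (z : int) : 'M[R]_d :=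
  if in_band n k z then a z else 0.

Lemma Ek_symbol (R : nzRingType) n d (k : nat) (T : blockmx R n d) a :
  (forall p q, T p q = a (p%:Z - q%:Z)) ->
  forall p q, Ek k T p q = band_symbol n k a (p%:Z - q%:Z).
Proof. by move=> hT p q; rewrite /Ek hT. Qed.

Lemma in_band_corners (m k x : nat) : (x < m)%N -> (k < m.+1)%N ->
  [/\ in_band m.+1 k (x%:Z - m%:Z) = (x.+1 == k),
      in_band m.+1 k x.+1%:Z = (x.+1 == k),
      in_band m.+1 k (m%:Z - x%:Z) = (m - x == k)%N &
      in_band m.+1 k (- x.+1%:Z) = (m - x == k)%N].
Proof. by move=> hx hk; split; apply/idP/idP; rewrite /in_band; lia. Qed.

Lemma band_corner_cond (R : nzRingType) m d (k l : nat) (a b : int -> 'M[R]_d) :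
  (k < m.+1)%N -> (l < m.+1)%N -> corner_cond m a b ->
  corner_cond m (band_symbol m.+1 k a) (band_symbol m.+1 l b).
Proof.
move=> hk hl corner x y hx hy; rewrite /band_symbol.
have [-> -> _ _] := in_band_corners hx hk.
have [_ _ -> ->] := in_band_corners hy hl.
by case: eqP; case: eqP; rewrite ?mul0mx ?mulmx0 // => _ _; apply: corner.
Qed.

Theorem lemma4p1 (R : nzRingType) (n d : nat) (A B : blockmx R n d) :
  is_block_toeplitz A -> is_block_toeplitz B -> tcomm A B ->
  forall i j : 'I_n, tcomm (Ek i A) (Ek j B).
Proof.
move=> [a hA] [b hB] hAB i j.
case: n A B i j hA hB hAB => [|m] A B i j hA hB hAB; first by case: i.
apply/(tcomm_cornerP (Ek_symbol i hA) (Ek_symbol j hB)).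
exact/band_corner_cond/(tcomm_cornerP hA hB).
Qed.
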